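(* Let $G$ be a finite nested group with chain of centers $G=X_0>X_1>\dots>X_n\ge1$. If $N$ is a normal subgroup of $G$, then for each $i=1,\dots,n$ either $[X_{i-1},G]\le N$ or $N\le X_i$.
   Context: For $\chi\in\mathrm{Irr}(G)$, $Z(\chi)=\{g\in G: |\chi(g)|=\chi(1)\}$. $G$ is nested if for all $\chi,\psi\in\mathrm{Irr}(G)$ either $Z(\chi)\le Z(\psi)$ or $Z(\psi)\le Z(\chi)$; then the distinct subgroups $Z(\chi)$, $\chi\in\mathrm{Irr}(G)$, form a chain $G=X_0>X_1>\dots>X_n\ge1$, the chain of centers. *)

From HB Require Import structures.
From mathcomp Require Import all_boot all_order all_algebra all_fingroup all_solvable all_field all_character.
Set Implicit Arguments. Unset Strict Implicit. Unset Printing Implicit Defensive.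
Import Order.TTheory GRing.Theory Num.Theory.

Local Open Scope ring_scope.

Definition Zchi (gT : finGroupType) (G : {group gT}) (chi : 'CF(G)) : {set gT} :=
  [set g in G | `|chi g| == chi 1%g].

Definition nested (gT : finGroupType) (G : {group gT}) : Prop :=
  forall i j : Iirr G,
    (Zchi 'chi_i \subset Zchi 'chi_j) \/ (Zchi 'chi_j \subset Zchi 'chi_i).

Definition chain_of_centers (gT : finGroupType) (G : {group gT})
    (n : nat) (X : nat -> {set gT}) : Prop :=
  [/\ forall k, (k < n)%N -> X k.+1 \proper X k,
      forall i : Iirr G, exists2 k, (k <= n)%N & Zchi 'chi_i = X k
    & forall k, (k <= n)%N -> exists i : Iirr G, X k = Zchi 'chi_i].

From HB Require Import structures.
From mathcomp Require Import all_boot all_order all_algebra all_fingroup all_solvable all_field all_character.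
Set Implicit Arguments. Unset Strict Implicit. Unset Printing Implicit Defensive.
Local Open Scope group_scope.
Local Open Scope ring_scope.

(* A normal subgroup N is the intersection of the kernels of the irreducible
   characters whose kernel contains it, and [Z(chi), G] <= ker chi for each of
   them.  If Z(chi) = X_k with k >= i, then N <= ker chi <= Z(chi) <= X_i;
   so if N is not below X_i, every such chi has k < i, hence X_(i-1) <= Z(chi)
   and [X_(i-1), G] <= ker chi.  Nestedness only enters through the existence
   of the chain of centers. *)

Lemma Zchi_irrE (gT : finGroupType) (G : {group gT}) (i : Iirr G) :
  Zchi 'chi_i = ('Z('chi_i))%CF.
Proof.
apply/setP=> x; rewrite /Zchi inE.
have [Gx|notGx] := boolP (x \in G); first by rewrite irr_cfcenterE.
by apply/esym/negbTE; apply: contra notGx; apply/subsetP/cfcenter_sub.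
Qed.

Lemma commg_cfcenter_ker (gT : finGroupType) (G : {group gT}) (phi : 'CF(G)) :
  [~: ('Z(phi))%CF, G] \subset cfker phi.
Proof.
have nKG := normal_norm (cfker_normal phi).
rewrite -quotient_cents2 //; last exact: subset_trans (cfcenter_sub _) nKG.
exact: subset_trans (cfcenter_subset_center phi) (subsetIr _ _).
Qed.

Lemma commg_sub_normal_cfcenter (gT : finGroupType) (G N : {group gT})
    (A : {set gT}) :
  N <| G -> (forall i : Iirr G, N \subset cfker 'chi_i -> A \subset 'Z('chi_i)%CF) ->
  [~: A, G] \subset N.
Proof.
move=> nsNG sAZ; rewrite -(cap_cfker_normal nsNG); apply/bigcapsP=> i sNK.
exact: subset_trans (commSg G (sAZ i sNK)) (commg_cfcenter_ker _).
Qed.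

Lemma decreasing_chain_sub (T : finType) (n : nat) (X : nat -> {set T}) :
  (forall k, (k < n)%N -> X k.+1 \subset X k) ->
  forall a b, (a <= b <= n)%N -> X b \subset X a.
Proof.
move=> sX a; elim=> [|b IHb] /andP[ab bn]; first by move: ab; rewrite leqn0 => /eqP->.
rewrite leq_eqVlt in ab; case/orP: ab => [/eqP-> // | ab].
apply: subset_trans (sX b bn) (IHb _).
by rewrite -ltnS ab ltnW.
Qed.

Theorem lemma4p1 (gT : finGroupType) (G N : {group gT}) (n : nat)
    (X : nat -> {set gT}) :
  nested G -> chain_of_centers G n X -> (N <| G)%g ->
  forall i : nat, (1 <= i <= n)%N ->
    ([~: X i.-1, G]%g \subset N) \/ (N \subset X i).
Proof.
move=> _ [properX centerX _] nsNG i /andP[i_gt0 i_le_n].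
have sX := decreasing_chain_sub (fun k lt_kn => proper_sub (properX k lt_kn)).
have [sNXi|not_sNXi] := boolP (N \subset X i); [by right | left].
apply: commg_sub_normal_cfcenter nsNG _ => j sNK.
have [k k_le_n ZjE] := centerX j; rewrite -Zchi_irrE ZjE.
have [le_ik|lt_ki] := leqP i k.
  case/negP: not_sNXi; apply: subset_trans sNK _.
  have sKZ : cfker 'chi_j \subset X k.
    by rewrite -ZjE Zchi_irrE; exact: normal_sub (cfker_center_normal _).
  by apply: subset_trans sKZ (sX _ _ _); rewrite le_ik.
apply: sX; rewrite -ltnS prednK // lt_ki /=.
exact: leq_trans (leq_pred i) i_le_n.
Qed.
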